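(* Let $\mathcal{SP}$ be the class of split graphs. Then: (i) $R_1^{\mathcal{SP}}(4,5)=7$ and $R_1^{\mathcal{SP}}(4,6)=8$; (ii) $R_2^{\mathcal{SP}}(6,7)=11$ and $R_2^{\mathcal{SP}}(6,8)=12$; (iii) $R_2^{\mathcal{SP}}(5,6)=8$ and $R_2^{\mathcal{SP}}(5,7)=9$; (iv) $R_2^{\mathcal{SP}}(5,j)=j+3$ for all integers $8\leq j\leq 12$.
   Context: All graphs are finite and simple. For a graph $G$ and a nonnegative integer $k$, a $k$-sparse $j$-set is a set of $j$ vertices of $G$ inducing a subgraph of maximum degree at most $k$; a $k$-dense $i$-set is a set of $i$ vertices of $G$ that is $k$-sparse in the complement of $G$. For a graph class $\mathcal{G}$, $R_k^{\mathcal{G}}(i,j)$ is the smallest natural number $n$ such that every graph on $n$ vertices in $\mathcal{G}$ has either a $k$-dense $i$-set or a $k$-sparse $j$-set. A split graph is a graph whose vertex set can be partitioned into a clique and an independent set. *)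

From mathcomp Require Import all_boot.
Set Implicit Arguments. Unset Strict Implicit. Unset Printing Implicit Defensive.

Definition simple_graph (n : nat) (e : rel 'I_n) : Prop :=
  symmetric e /\ irreflexive e.

Definition compl_graph (n : nat) (e : rel 'I_n) : rel 'I_n :=
  fun x y => (x != y) && ~~ e x y.

Definition split_graph (n : nat) (e : rel 'I_n) : Prop :=
  exists K : {set 'I_n},
    (forall x y, x \in K -> y \in K -> x != y -> e x y) /\
    (forall x y, x \notin K -> y \notin K -> ~~ e x y).

Definition sparse_set (n : nat) (e : rel 'I_n) (k j : nat) (S : {set 'I_n}) : Prop :=
  #|S| = j /\ forall v, v \in S -> #|[set u in S | e v u]| <= k.

Definition dense_set (n : nat) (e : rel 'I_n) (k i : nat) (S : {set 'I_n}) : Prop :=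
  sparse_set (compl_graph e) k i S.

Definition split_ramsey_prop (k i j n : nat) : Prop :=
  forall e : rel 'I_n, simple_graph e -> split_graph e ->
    (exists S, dense_set e k i S) \/ (exists S, sparse_set e k j S).

Definition split_ramsey_number_is (k i j n : nat) : Prop :=
  split_ramsey_prop k i j n /\ forall m, m < n -> ~ split_ramsey_prop k i j m.

From mathcomp Require Import all_boot zify.
Set Implicit Arguments. Unset Strict Implicit. Unset Printing Implicit Defensive.

(* Let K be the clique and I the independent set of a split graph, a = |K|,
   b = |I|, with a < i and b < j.  Adding t = j - b vertices of K to I gives
   a k-sparse j-set as soon as each of them has at most k + 1 - t neighbours
   in I; dually, adding s = i - a vertices of I to K gives a k-dense i-set as
   soon as each of them misses at most k + 1 - s vertices of K.  Otherwise at
   least a - t + 1 vertices of K have at least k + 2 - t neighbours in I and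
   at least b - s + 1 vertices of I miss at least k + 2 - s vertices of K;
   as each of the ab pairs of K x I is an edge or a non-edge,
   (a - t + 1)(k + 2 - t) + (b - s + 1)(k + 2 - s) <= ab, which is false for
   every relevant (a, b).
   Conversely, each clique vertex of a k-sparse j-set has at most k + 1 + b - j
   neighbours in I, and each independent vertex of a k-dense i-set misses at
   most k + 1 + a - i vertices of K, so a split graph with fewer than j - b
   clique vertices of the first kind and fewer than i - a independent
   vertices of the second kind has neither. *)

Lemma exists_subset_card (T : finType) (B : {set T}) j :
  j <= #|B| -> exists2 S : {set T}, S \subset B & #|S| = j.
Proof.
move=> le_jB; have : 0 < #|[set S : {set T} | S \subset B & #|S| == j]|.
  by rewrite cards_draws bin_gt0.
by case/card_gt0P=> S; rewrite inE => /andP[sSB /eqP cardS]; exists S.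
Qed.

Lemma card_setU_disjoint (T : finType) (A B : {set T}) :
  [disjoint A & B] -> #|A :|: B| = #|A| + #|B|.
Proof. by move=> disAB; have [_ /eqP] := leq_card_setU A B; rewrite disAB; apply. Qed.

Section SplitGraphs.
Variable n : nat.
Implicit Types (e : rel 'I_n) (A B C S : {set 'I_n}).

Definition deg_in e A v := #|[set u in A | e v u]|.
Definition clique e A := forall x y, x \in A -> y \in A -> x != y -> e x y.
Definition independent e B := forall x y, x \in B -> y \in B -> ~~ e x y.

Lemma compl_graph_irr e : irreflexive (compl_graph e).
Proof. by move=> x; rewrite /compl_graph eqxx. Qed.

Lemma compl_graph_sym e : symmetric e -> symmetric (compl_graph e).
Proof. by move=> sym x y; rewrite /compl_graph eq_sym sym. Qed.

Lemma independent_compl e A : clique e A -> independent (compl_graph e) A.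
Proof.
move=> clA x y xA yA; rewrite /compl_graph negb_and negbK.
by case: eqP => [//|/eqP xy]; rewrite clA.
Qed.

Lemma clique_compl e B : independent e B -> clique (compl_graph e) B.
Proof. by move=> indB x y xB yB xy; rewrite /compl_graph xy indB. Qed.

Lemma deg_in_compl e A v : v \notin A ->
  deg_in e A v + deg_in (compl_graph e) A v = #|A|.
Proof.
move=> vA; rewrite /deg_in -(cardsID [set u | e v u] A).
congr (_ + _); apply: eq_card => u; rewrite !inE // /compl_graph.
by have [->|_] := eqVneq u v; rewrite ?(negbTE vA) ?andbF // andbC.
Qed.

Lemma sum_deg_in_sym e A B : symmetric e ->
  \sum_(c in A) deg_in e B c = \sum_(u in B) deg_in e A u.
Proof.
move=> sym; have deg_sum X v : deg_in e X v = \sum_(u in X) e v u.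
  rewrite /deg_in -sum1_card big_mkcond [RHS]big_mkcond; apply: eq_bigr => u _.
  by rewrite inE; case: (u \in X); case: (e v u).
rewrite (eq_bigr _ (fun c _ => deg_sum B c)) (eq_bigr _ (fun c _ => deg_sum A c)).
by rewrite exchange_big; apply: eq_bigr => u _; apply: eq_bigr => c _; rewrite sym.
Qed.

Lemma sum_deg_in_cross e A B : symmetric e -> [disjoint A & B] ->
  \sum_(c in A) deg_in e B c + \sum_(u in B) deg_in (compl_graph e) A u = #|A| * #|B|.
Proof.
move=> sym disAB; rewrite -(sum_deg_in_sym _ _ (compl_graph_sym sym)) -big_split /=.
by rewrite -sum_nat_const; apply: eq_bigr => c cA; rewrite deg_in_compl // (disjointFr disAB).
Qed.

Lemma sparse_set_of_independent e k j B : independent e B -> j <= #|B| ->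
  exists S, sparse_set e k j S.
Proof.
move=> indB /exists_subset_card [S sSB cardS]; exists S; split=> // v vS.
suff -> : [set u in S | e v u] = set0 by rewrite cards0.
apply/setP=> u; rewrite !inE; apply/negbTE; apply/nandP.
by case uS: (u \in S); [right; apply: indB; apply: (subsetP sSB) | left].
Qed.

Lemma sparse_setU e k B C : irreflexive e -> independent e B -> [disjoint C & B] ->
  #|C| <= k -> (forall c, c \in C -> #|C| + deg_in e B c <= k.+1) ->
  sparse_set e k (#|C| + #|B|) (C :|: B).
Proof.
move=> irr indB disCB leCk lowC; split; first exact: card_setU_disjoint.
move=> v; rewrite inE => /orP[vC|vB].
- rewrite -ltnS; apply: leq_trans (lowC v vC).
  rewrite (cardsD1 v C) vC add1n addSn ltnS.
  apply: leq_trans (leq_card_setU _ _); apply: subset_leq_card; apply/subsetP=> w.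
  rewrite !inE => /andP[/orP[wC|wB] evw]; last by rewrite wB evw orbT.
  by have [wv|_] := eqVneq w v; [rewrite wv irr in evw | rewrite wC].
- apply: leq_trans leCk; apply: subset_leq_card; apply/subsetP=> w.
  by rewrite !inE => /andP[/orP[//|wB] evw]; rewrite (negbTE (indB _ _ vB wB)) in evw.
Qed.

Lemma sparse_set_or_many_edges e k t A B :
  irreflexive e -> independent e B -> [disjoint A & B] -> t <= k ->
  (exists S, sparse_set e k (t + #|B|) S) \/
  (#|A| - t.-1) * (k.+2 - t) <= \sum_(c in A) deg_in e B c.
Proof.
move=> irr indB disAB letk; set L := [set c in A | t + deg_in e B c <= k.+1].
have sLA : L \subset A by apply/subsetP=> c; rewrite inE => /andP[].
have [leLt|ltLt] := leqP t #|L|.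
  have [C sCL cardC] := exists_subset_card leLt; left; exists (C :|: B).
  rewrite -cardC; apply: sparse_setU; rewrite ?cardC //.
    exact: disjointWl (subset_trans sCL sLA) disAB.
  by move=> c /(subsetP sCL); rewrite inE => /andP[].
right; apply: leq_trans (_ : \sum_(c in A :\: L) deg_in e B c <= _); last first.
  by rewrite [X in _ <= X](big_setID L) leq_addl.
apply: leq_trans (_ : #|A :\: L| * (k.+2 - t) <= _).
  by rewrite cardsDS // leq_mul2r; apply/orP; right; lia.
rewrite -sum_nat_const; apply: leq_sum => c /setDP[cA].
by rewrite inE cA /= -ltnNge => highc; lia.
Qed.

Lemma sparse_set_deg_bound e k j B S c : clique e (~: B) -> sparse_set e k j S ->
  c \in S :\: B -> deg_in e B c + j <= k.+1 + #|B|.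
Proof.
move=> clB [cardS sparseS] cSB; have /setDP[cS cB] := cSB.
set N := [set u in B | e c u]; set X := (S :\: B) :\ c.
have leN : #|N| <= #|N :&: S| + #|B :\: S|.
  apply: leq_trans (leq_card_setU _ _); apply: subset_leq_card; apply/subsetP=> u.
  by rewrite !inE => /andP[uB ecu]; rewrite uB ecu andbT; case: (u \in S).
have leX : #|X| + #|N :&: S| <= k.
  have disX : [disjoint X & N :&: S].
    rewrite -setI_eq0; apply/eqP/setP=> u; rewrite !inE.
    by case: (u \in B); rewrite ?andbF.
  rewrite -card_setU_disjoint //; apply: leq_trans (sparseS c cS).
  apply: subset_leq_card; apply/subsetP=> u; rewrite !inE.
  case/orP=> [/and3P[uc uB uS]|/andP[/andP[_ ecu] uS]]; rewrite uS //=.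
  by apply: clB; rewrite ?inE // eq_sym.
have cardSB : #|S :\: B| = 1 + #|X| by rewrite (cardsD1 c) cSB.
have cardSj : #|S :&: B| + #|S :\: B| = j by rewrite cardsID.
have cardB : #|B :&: S| + #|B :\: S| = #|B| by rewrite cardsID.
by rewrite setIC in cardB; rewrite /deg_in -/N; lia.
Qed.

Lemma no_sparse_set e k j B : clique e (~: B) ->
  #|[set c in ~: B | deg_in e B c + j <= k.+1 + #|B|]| + #|B| < j ->
  ~ exists S, sparse_set e k j S.
Proof.
move=> clB few [S sparseS]; have [cardS _] := sparseS.
have leSB : #|S :\: B| <= #|[set c in ~: B | deg_in e B c + j <= k.+1 + #|B|]|.
  apply: subset_leq_card; apply/subsetP=> c cSB; have /setDP[_ cB] := cSB.
  by rewrite !inE cB (sparse_set_deg_bound clB sparseS cSB).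
have leSIB : #|S :&: B| <= #|B| by rewrite subset_leq_card ?subsetIr.
by move: (cardsID B S); rewrite cardS; lia.
Qed.

End SplitGraphs.

Definition counting_bound k i j a b : bool :=
  let s := i - a in let t := j - b in
  [&& s <= k, t <= k & a * b < (a - t.-1) * (k.+2 - t) + (b - s.-1) * (k.+2 - s)].

Lemma split_ramsey_prop_of_counting k i j n :
  all (fun a => (a < i) && (n - a < j) ==> counting_bound k i j a (n - a)) (iota 0 n.+1) ->
  split_ramsey_prop k i j n.
Proof.
move=> hcount e [sym irr] [K [clK indK]].
have indI : independent e (~: K) by move=> x y; rewrite !inE; apply: indK.
have disKI : [disjoint K & ~: K] by rewrite disjoints_subset setCK.
have disIK : [disjoint ~: K & K] by rewrite disjoints_subset.
have cardI : #|~: K| = n - #|K| by have := cardsC K; rewrite card_ord; lia.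
have [leiK|ltKi] := leqP i #|K|.
  by left; apply: sparse_set_of_independent (independent_compl clK) leiK.
have [lejI|ltIj] := leqP j #|~: K|.
  by right; apply: sparse_set_of_independent indI lejI.
have Kn : #|K| \in iota 0 n.+1.
  by rewrite mem_iota; have := cardsC K; rewrite card_ord; lia.
have := implyP (allP hcount _ Kn); rewrite ltKi -cardI ltIj.
case/(_ isT)/and3P=> lesk letk crossing.
have [|sparse_many] := sparse_set_or_many_edges irr indI disKI letk.
  by rewrite subnK ?(ltnW ltIj) // => ?; right.
have [|dense_many] :=
  sparse_set_or_many_edges (compl_graph_irr e) (independent_compl clK) disIK lesk.
  by rewrite subnK ?(ltnW ltKi) // => ?; left.
have := leq_add sparse_many dense_many; rewrite sum_deg_in_cross // => le_cross.
by rewrite ltnNge le_cross in crossing.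
Qed.

Lemma sparse_set_imset m p (f : 'I_m -> 'I_p) (e' : rel 'I_m) (e : rel 'I_p) k j S :
  injective f -> (forall x y, e' x y = e (f x) (f y)) ->
  sparse_set e' k j S -> sparse_set e k j (f @: S).
Proof.
move=> finj fe [cardS sparseS]; split; first by rewrite card_imset.
move=> _ /imsetP[v vS ->]; apply: leq_trans (sparseS v vS).
rewrite -(card_imset _ finj); apply: subset_leq_card; apply/subsetP=> w.
by rewrite inE => /andP[/imsetP[u uS ->] evu]; apply: imset_f; rewrite inE uS fe.
Qed.

Lemma split_ramsey_prop_monotone k i j m p : m <= p ->
  split_ramsey_prop k i j m -> split_ramsey_prop k i j p.
Proof.
move=> lemp hm e [sym irr] [K [clK indK]].
pose f := widen_ord lemp.
have finj : injective f by move=> x y fxy; apply: val_inj; apply: (congr1 val fxy).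
pose e' : rel 'I_m := fun x y => e (f x) (f y).
have split' : split_graph e'.
  exists (f @^-1: K); split=> x y; rewrite !inE; last exact: indK.
  by move=> xK yK xy; apply: clK; rewrite // (inj_eq finj).
have [] := hm e' (conj (fun x y => sym (f x) (f y)) (fun x => irr (f x))) split'.
- case=> S denseS; left; exists (f @: S); apply: (sparse_set_imset finj _ denseS).
  by move=> x y; rewrite /compl_graph (inj_eq finj).
- by case=> S sparseS; right; exists (f @: S); apply: sparse_set_imset sparseS.
Qed.

Lemma split_ramsey_number_is_tight k i j n :
  split_ramsey_prop k i j n.+1 -> ~ split_ramsey_prop k i j n ->
  split_ramsey_number_is k i j n.+1.
Proof.
move=> hn1 not_hn; split=> // m ltmn hm; apply: not_hn.
by apply: split_ramsey_prop_monotone hm; rewrite -ltnS.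
Qed.

(* The vertices below [a] form the clique; [adj] lists the remaining edges as
   pairs [(c, u)] with [c < a <= u]. *)
Definition split_rel (a : nat) (adj : seq (nat * nat)) : rel nat := fun x y =>
  (x != y) && [|| (x < a) && (y < a), (x < a) && ((x, y) \in adj)
                | (y < a) && ((y, x) \in adj)].

Lemma card_ord_count n (P : pred 'I_n) (p : pred nat) :
  (forall x : 'I_n, P x = p x) -> #|[set x | P x]| = count p (iota 0 n).
Proof.
move=> Pp; rewrite -val_enum_ord count_map cardE /enum_mem size_filter.
rewrite (@eq_filter _ _ predT) ?filter_predT //.
by apply: eq_count => x /=; rewrite !inE Pp.
Qed.

Lemma count_iota_ltn (p : pred nat) a n : a <= n ->
  count (fun x => (x < a) && p x) (iota 0 n) = count p (iota 0 a).
Proof.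
move=> le_an; rewrite -(subnKC le_an) iotaD count_cat add0n.
rewrite (@eq_in_count _ _ pred0 (iota a _)) ?count_pred0 ?addn0.
  by apply: eq_in_count => x; rewrite mem_iota add0n => /andP[_ ->].
by move=> x; rewrite mem_iota => /andP[le_ax _]; rewrite ltnNge le_ax.
Qed.

Lemma count_iota_geq (p : pred nat) a n : a <= n ->
  count (fun x => (a <= x) && p x) (iota 0 n) = count p (iota a (n - a)).
Proof.
move=> le_an; rewrite -{1}(subnKC le_an) iotaD count_cat add0n.
rewrite (@eq_in_count _ _ pred0 (iota 0 a)) ?count_pred0 ?add0n.
  by apply: eq_in_count => x; rewrite mem_iota => /andP[->].
by move=> x; rewrite mem_iota add0n => /andP[_ lt_xa]; rewrite leqNgt lt_xa.
Qed.

(* [no_sparse_set] for the graph and for its complement, with the degrees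
   counted on [nat]. *)
Lemma split_rel_lower_bound n a adj k i j : a <= n ->
  count (fun c => count (split_rel a adj c) (iota a (n - a)) + j <= k.+1 + (n - a))
    (iota 0 a) + (n - a) < j ->
  count (fun u => count (predC (split_rel a adj u)) (iota 0 a) + i <= k.+1 + a)
    (iota a (n - a)) + a < i ->
  ~ split_ramsey_prop k i j n.
Proof.
move=> le_an few_sparse few_dense hn.
pose e : rel 'I_n := fun x y => split_rel a adj x y.
pose K := [set x : 'I_n | x < a].
have inK x : (x \in K) = (x < a) by rewrite inE.
have card_inK (p : pred nat) : #|[set x in K | p x]| = count p (iota 0 a).
  by rewrite -(count_iota_ltn _ le_an); apply: card_ord_count => x; rewrite inK.
have card_notinK (p : pred nat) :
    #|[set x in ~: K | p x]| = count p (iota a (n - a)).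
  rewrite -(count_iota_geq _ le_an); apply: card_ord_count => x.
  by rewrite inE inK -leqNgt.
have cardK : #|K| = a.
  rewrite -(size_iota 0 a) -count_predT -card_inK.
  by apply: eq_card => x; rewrite !inE andbT.
have cardI : #|~: K| = n - a.
  rewrite -(size_iota a (n - a)) -count_predT -card_notinK.
  by apply: eq_card => x; rewrite !inE andbT.
have degK c : c \notin K ->
    deg_in (compl_graph e) K c = count (predC (split_rel a adj c)) (iota 0 a).
  move=> cK; rewrite -card_inK; apply: eq_card => x; rewrite !inE /compl_graph.
  case xK: (x < a) => //=; suff -> : c != x by [].
  by apply: contraNneq cK => ->; rewrite inK.
have sym : symmetric e.
  move=> x y; rewrite /e /split_rel eq_sym.
  by case: (x < a); case: (y < a); rewrite /= ?orbF ?orbT // orbC.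
have irr : irreflexive e by move=> x; rewrite /e /split_rel eqxx.
have clK : clique e K by move=> x y; rewrite !inK /e /split_rel => -> -> ->.
have indI : independent e (~: K).
  move=> x y; rewrite !inE -!leqNgt /e /split_rel => le_ax le_ay.
  by rewrite !ltnNge le_ax le_ay /= andbF.
have [] := hn e (conj sym irr).
- by exists K; split=> // x y xK yK; apply: indI; rewrite inE.
- apply: no_sparse_set (clique_compl indI) _; rewrite cardK.
  apply: leq_ltn_trans few_dense; rewrite leq_add2r -card_notinK.
  apply: subset_leq_card; apply/subsetP=> c; rewrite !inE => /andP[cK].
  by rewrite degK ?inE // cK.
- apply: (@no_sparse_set _ e k j (~: K)); rewrite setCK // cardI.
  apply: leq_ltn_trans few_sparse; rewrite leq_add2r -card_inK.
  by apply: subset_leq_card; apply/subsetP=> c; rewrite !inE /deg_in card_notinK.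
Qed.

Definition edges_R1_4 := [:: (0, 3); (1, 4)].
Definition edges_R2_6 :=
  [:: (0, 5); (1, 5); (1, 6); (2, 6); (2, 7); (3, 7); (3, 8); (0, 8)].
Definition edges_R2_5_short := [:: (0, 4); (1, 5)].
Definition edges_R2_5_long := [:: (0, 4); (0, 5); (1, 6); (1, 7); (2, 8); (2, 9)].

Theorem theorem6p4 :
  (split_ramsey_number_is 1 4 5 7 /\ split_ramsey_number_is 1 4 6 8) /\
  (split_ramsey_number_is 2 6 7 11 /\ split_ramsey_number_is 2 6 8 12) /\
  (split_ramsey_number_is 2 5 6 8 /\ split_ramsey_number_is 2 5 7 9) /\
  (forall j : nat, 8 <= j <= 12 -> split_ramsey_number_is 2 5 j (j + 3)).
Proof.
split; [split | split; [split | split; [split | ]]].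
- apply: split_ramsey_number_is_tight; first exact: split_ramsey_prop_of_counting.
  exact: (@split_rel_lower_bound _ 3 edges_R1_4).
- apply: split_ramsey_number_is_tight; first exact: split_ramsey_prop_of_counting.
  exact: (@split_rel_lower_bound _ 3 edges_R1_4).
- apply: split_ramsey_number_is_tight; first exact: split_ramsey_prop_of_counting.
  exact: (@split_rel_lower_bound _ 5 edges_R2_6).
- apply: split_ramsey_number_is_tight; first exact: split_ramsey_prop_of_counting.
  exact: (@split_rel_lower_bound _ 5 edges_R2_6).
- apply: split_ramsey_number_is_tight; first exact: split_ramsey_prop_of_counting.
  exact: (@split_rel_lower_bound _ 4 edges_R2_5_short).
- apply: split_ramsey_number_is_tight; first exact: split_ramsey_prop_of_counting.
  exact: (@split_rel_lower_bound _ 4 edges_R2_5_short).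
move=> j /andP[le8j lej12].
have : j \in iota 8 5 by rewrite mem_iota le8j ltnS.
rewrite !inE => /or4P[| | | /orP[]] /eqP->; apply: split_ramsey_number_is_tight.
all: first [exact: split_ramsey_prop_of_counting
           | exact: (@split_rel_lower_bound _ 4 edges_R2_5_long)].
Qed.
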